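(* For all integers $n,m\ge 2$, the number $a(n,m,\Gamma_{sp})$ of single-peaked $(n,m)$-elections on the candidate set $\{c_1,\ldots,c_m\}$ satisfies $a(n,m,\Gamma_{sp})\le m!\cdot 4^{(m-1)(n-1)}$.
   Context: An $(n,m)$-election $(C,\mathcal{P})$ is a set $C$ of $m$ candidates with an ordered $n$-tuple $\mathcal{P}=(V_1,\ldots,V_n)$ of total orders (votes) on $C$. Given a total order $A$ on $C$ (an axis), a vote $V$ contains a valley with respect to $A$ on candidates $c_1,c_2,c_3$ if $c_2$ lies strictly between $c_1$ and $c_3$ in $A$ and $V$ ranks $c_2$ below both $c_1$ and $c_3$. The election is single-peaked with respect to $A$ if no vote contains a valley with respect to $A$, and single-peaked if it is single-peaked with respect to some total order $A$ on $C$. *)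

From mathcomp Require Import all_boot all_fingroup.
Set Implicit Arguments. Unset Strict Implicit. Unset Printing Implicit Defensive.

(* A total order on 'I_m is represented by a permutation s : {perm 'I_m},
   where s c is the position of candidate c (position 0 = first/top).
   For a vote V: V c < V d means c is ranked above (preferred to) d.
   For an axis A: A c is the position of c along the axis. *)
Definition vote m := {perm 'I_m}.
Definition axis m := {perm 'I_m}.

Definition election n m := {ffun 'I_n -> vote m}.

Definition between m (A : axis m) (c1 c2 c3 : 'I_m) : bool :=
  ((A c1 < A c2) && (A c2 < A c3)) || ((A c3 < A c2) && (A c2 < A c1)).

Definition has_valley m (A : axis m) (V : vote m) (c1 c2 c3 : 'I_m) : bool :=
  between A c1 c2 c3 && (V c1 < V c2) && (V c3 < V c2).

Definition single_peaked_wrt n m (A : axis m) (P : election n m) : bool :=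
  [forall i, forall c1, forall c2, forall c3, ~~ has_valley A (P i) c1 c2 c3].

Definition single_peaked n m (P : election n m) : bool :=
  [exists A : axis m, single_peaked_wrt A P].

Definition num_single_peaked n m : nat :=
  #|[set P : election n m | single_peaked P]|.

From mathcomp Require Import all_boot all_fingroup zify.

Set Implicit Arguments. Unset Strict Implicit. Unset Printing Implicit Defensive.

(* A vote single-peaked w.r.t. an axis A is determined by its top candidate p
   and by the set of ranks held by candidates lying left of p on A, since on
   each side of p candidates closer to p are preferred.  That set of ranks
   avoids rank 0 and has exactly A p elements, so it also determines p; hence
   at most 2^(m-1) votes are single-peaked w.r.t. A.  Summing |sp_votes A|^n
   over the m! axes bounds the number of single-peaked elections by
   m! 2^((m-1) n), and n <= 2 (n - 1) for n >= 2. *)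

Lemma leq_card_bigcup (I T : finType) (F : I -> {set T}) :
  #|\bigcup_i F i| <= \sum_i #|F i|.
Proof.
apply: (big_ind2 (fun (S : {set T}) k => #|S| <= k)) => // [|S1 k1 S2 k2 le1 le2].
  by rewrite cards0.
by rewrite (leq_trans (leq_card_setU _ _)) ?leq_add.
Qed.

Lemma card_perm_lt n (s : {perm 'I_n}) a : a <= n -> #|[set i | s i < a]| = a.
Proof.
move=> le_an.
have -> : [set i | s i < a] = s @^-1: [set j : 'I_n | j < a].
  by apply/setP => i; rewrite !inE.
rewrite card_preimset; last exact: perm_inj.
rewrite -sum1_card (eq_bigl (fun j : 'I_n => j < a)) => [|j]; last by rewrite inE.
by rewrite (big_ord_narrow le_an) sum1_card card_ord.
Qed.

Section SinglePeakedVotes.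

Variables (m : nat) (A : axis m).

Definition sp_votes : {set vote m} :=
  [set V | [forall c1, forall c2, forall c3, ~~ has_valley A V c1 c2 c3]].

Lemma sp_votesP V :
  reflect (forall c1 c2 c3, ~~ has_valley A V c1 c2 c3) (V \in sp_votes).
Proof.
rewrite inE; apply: (iffP forallP) => [h c1 c2 c3 | h c1].
  by move/forallP: (h c1) => /(_ c2) /forallP.
by apply/forallP => c2; apply/forallP => c3.
Qed.

Lemma between_peak_lt V p c d :
  V \in sp_votes -> V p = 0 :> nat -> between A c d p -> V d < V c.
Proof.
move=> /sp_votesP spV Vp0 bcdp.
have d_neq_p : d != p by apply: contraTneq bcdp => ->; rewrite /between ltnn andbF.
have d_neq_c : d != c by apply: contraTneq bcdp => ->; rewrite /between ltnn andbF.
have Vp_lt_Vd : V p < V d.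
  rewrite Vp0 lt0n; apply: contra d_neq_p => /eqP Vd0.
  by apply/eqP/(@perm_inj _ V)/val_inj; rewrite /= Vd0 Vp0.
move: (spV c d p); rewrite /has_valley bcdp Vp_lt_Vd andbT -leqNgt leq_eqVlt.
by case/orP=> [/eqP/val_inj/perm_inj dc | //]; rewrite dc eqxx in d_neq_c.
Qed.

Lemma between_peak_same_side p x y :
  x != y -> x != p -> y != p -> (A x < A p) = (A y < A p) ->
  between A x y p || between A y x p.
Proof.
rewrite /between -(inj_eq (@perm_inj _ A) x) -(inj_eq (@perm_inj _ A) x p).
by rewrite -(inj_eq (@perm_inj _ A) y) -3!val_eqE /=; lia.
Qed.

Lemma between_peak_agree_lt (V W : vote m) p x y :
  V \in sp_votes -> V p = 0 :> nat -> between A x y p ->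
  (V^-1)%g (V y) = (W^-1)%g (V y) -> W y < V x.
Proof.
move=> spV Vp0 bxyp; rewrite permK => ->; rewrite permKV.
exact: between_peak_lt spV Vp0 bxyp.
Qed.

Lemma sp_votes_eq (V W : vote m) p :
  V \in sp_votes -> W \in sp_votes -> V p = 0 :> nat -> W p = 0 :> nat ->
  (forall r, (A ((V^-1)%g r) < A p) = (A ((W^-1)%g r) < A p)) -> V = W.
Proof.
move=> spV spW Vp0 Wp0 same_side.
(* Strong induction on the rank r: the r-th choices of V and W lie on the same
   side of p, and if they differed, the one closer to p would already have
   been ranked before r by both votes. *)
suff eqVW r : (V^-1)%g r = (W^-1)%g r by apply/invg_inj/permP.
have [k] := ubnP r; elim: k r => // k IH r lt_rk.
set x := (V^-1)%g r; set y := (W^-1)%g r.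
have Vx : V x = r by rewrite permKV.
have Wy : W y = r by rewrite permKV.
have agree (r' : 'I_m) : r' < r -> (V^-1)%g r' = (W^-1)%g r'.
  by move=> lt_r'r; apply: IH; lia.
have [// | x_neq_y] := eqVneq x y.
have [r0 | r_gt0] := posnP r.
  have x_top : x = p by apply/(@perm_inj _ V)/val_inj; rewrite /= Vx Vp0 r0.
  have y_top : y = p by apply/(@perm_inj _ W)/val_inj; rewrite /= Wy Wp0 r0.
  by rewrite x_top y_top.
have x_neq_p : x != p by apply: contraTneq r_gt0 => xp; rewrite -Vx xp Vp0.
have y_neq_p : y != p by apply: contraTneq r_gt0 => yp; rewrite -Wy yp Wp0.
case/orP: (between_peak_same_side x_neq_y x_neq_p y_neq_p (same_side r)).
  move=> bxyp; have lt_yr : V y < r by rewrite -Vx (between_peak_lt spV Vp0 bxyp).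
  by have := between_peak_agree_lt spV Vp0 bxyp (agree _ lt_yr); rewrite Wy Vx ltnn.
move=> byxp; have lt_xr : W x < r by rewrite -Wy (between_peak_lt spW Wp0 byxp).
by have := between_peak_agree_lt spW Wp0 byxp (esym (agree _ lt_xr)); rewrite Wy Vx ltnn.
Qed.

End SinglePeakedVotes.

Lemma card_sp_votes m (A : axis m.+1) : #|sp_votes A| <= 2 ^ m.
Proof.
pose left_ranks (V : vote m.+1) : {set 'I_m.+1} :=
  [set r | A ((V^-1)%g r) < A ((V^-1)%g ord0)].
have card_left_ranks V : #|left_ranks V| = A ((V^-1)%g ord0).
  rewrite -[RHS](card_perm_lt (V^-1 * A)%g (ltnW (ltn_ord _))).
  by apply: eq_card => r; rewrite !inE permM.
have inj_left_ranks : {in sp_votes A &, injective left_ranks}.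
  move=> V W spV spW eq_left.
  have same_top : (V^-1)%g ord0 = (W^-1)%g ord0.
    by apply/(@perm_inj _ A)/val_inj; rewrite /= -!card_left_ranks eq_left.
  apply: (sp_votes_eq spV spW (p := (V^-1)%g ord0)).
  - by rewrite permKV.
  - by rewrite same_top permKV.
  - by move=> r; move/setP/(_ r): eq_left; rewrite !inE same_top.
rewrite -(card_in_imset inj_left_ranks).
have sub : left_ranks @: sp_votes A \subset powerset [set~ ord0].
  apply/subsetP => _ /imsetP[V _ ->]; rewrite inE; apply/subsetP => r.
  by rewrite !inE; apply: contraTneq => ->; rewrite ltnn.
by rewrite (leq_trans (subset_leq_card sub)) // card_powerset cardsC1 card_ord.
Qed.

Lemma single_peaked_wrtE n m (A : axis m) (P : election n m) :
  single_peaked_wrt A P = (P \in ffun_on (sp_votes A)).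
Proof.
apply/forallP/ffun_onP => spP i.
  apply/sp_votesP => c1 c2 c3.
  by move/forallP: (spP i) => /(_ c1) /forallP /(_ c2) /forallP /(_ c3).
apply/forallP => c1; apply/forallP => c2; apply/forallP => c3.
exact: sp_votesP (spP i) c1 c2 c3.
Qed.

Lemma num_single_peaked_le n m :
  num_single_peaked n m <= \sum_(A : axis m) #|sp_votes A| ^ n.
Proof.
have sub : [set P : election n m | single_peaked P]
    \subset \bigcup_(A : axis m) [set P in ffun_on (sp_votes A)].
  apply/subsetP => P; rewrite inE => /existsP[A spA].
  by apply/bigcupP; exists A; rewrite // inE -single_peaked_wrtE.
apply: leq_trans (subset_leq_card sub) (leq_trans (leq_card_bigcup _) _).
by apply/eq_leq/eq_bigr => A _; rewrite cardsE card_ffun_on card_ord.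
Qed.

Theorem mainTheorem5 (n m : nat) (hn : 2 <= n) (hm : 2 <= m) :
  num_single_peaked n m <= m`! * 4 ^ ((m - 1) * (n - 1)).
Proof.
case: m hm => [// | m] _.
apply: leq_trans (num_single_peaked_le n m.+1) _.
have le_sum :
    \sum_(A : axis m.+1) #|sp_votes A| ^ n <= \sum_(A : axis m.+1) 2 ^ (m * n).
  by apply: leq_sum => A _; rewrite expnM leq_exp2r ?card_sp_votes //; lia.
apply: leq_trans le_sum _.
rewrite sum_nat_const card_Sn leq_mul2l subSS subn0; apply/orP; right.
by rewrite -[4]/(2 ^ 2) -expnM leq_exp2l //; nia.
Qed.
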